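(* If a finite set $S\subset\mathbb{R}^3$ minimally surrounds the origin in $\mathbb{R}^3$, then either (i) $S$ is a critical tetrahedron, or (ii) $S$ is the union of two critical triangles sharing exactly one point, or (iii) $S$ is the disjoint union of a critical triangle and a critical segment, or (iv) $S$ consists of three disjoint critical segments.
   Context: A point set in $\mathbb{R}^d$ surrounds the origin if the origin lies in the interior of its convex hull; it minimally surrounds the origin if it surrounds the origin but no proper subset does. A point set $S$ surrounds the origin in a linear subspace $E$ if $S$ spans $E$ and the origin lies in the relative interior of $\mathrm{conv}(S)$. A $k$-simplex is a set of $k+1$ affinely independent points (segment, triangle, tetrahedron for $k=1,2,3$); a simplex $N$ is critical if it surrounds the origin in its linear hull. *)

From HB Require Import structures.
From mathcomp Require Import all_boot all_order all_algebra.
From mathcomp Require Import finmap.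
From mathcomp Require Import reals.
Set Implicit Arguments. Unset Strict Implicit. Unset Printing Implicit Defensive.
Import Order.TTheory GRing.Theory Num.Theory.
Local Open Scope ring_scope.
Local Open Scope fset_scope.

Section Defs.
Variables (R : realType) (n : nat).
Notation pt := 'rV[R]_n.

Definition in_conv (S : {fset pt}) (x : pt) : Prop :=
  exists w : pt -> R, (forall v, v \in S -> 0 <= w v) /\
    \sum_(v <- S) w v = 1 /\ \sum_(v <- S) w v *: v = x.

Definition in_span (S : {fset pt}) (x : pt) : Prop :=
  exists w : pt -> R, \sum_(v <- S) w v *: v = x.

(* the origin lies in the interior of conv S (standard topology on R^n,
   given by the max-norm) *)
Definition surrounds (S : {fset pt}) : Prop :=
  exists2 e : R, 0 < e &
    forall x : pt, (forall i, `|x ord0 i| < e) -> in_conv S x.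

(* S surrounds the origin in its linear hull E = span S: the origin lies in
   the relative interior of conv S w.r.t. E *)
Definition surrounds_in_span (S : {fset pt}) : Prop :=
  exists2 e : R, 0 < e &
    forall x : pt, in_span S x -> (forall i, `|x ord0 i| < e) -> in_conv S x.

Definition minimally_surrounds (S : {fset pt}) : Prop :=
  surrounds S /\ forall T : {fset pt}, T `<` S -> ~ surrounds T.

Definition affinely_independent (S : {fset pt}) : Prop :=
  forall w : pt -> R, \sum_(v <- S) w v *: v = 0 -> \sum_(v <- S) w v = 0 ->
    forall v, v \in S -> w v = 0.

Definition simplex (k : nat) (S : {fset pt}) : Prop :=
  #|` S| = k.+1 /\ affinely_independent S.

Definition critical (k : nat) (S : {fset pt}) : Prop :=
  simplex k S /\ surrounds_in_span S.

End Defs.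

From HB Require Import structures.
From mathcomp Require Import all_boot all_order all_algebra.
From mathcomp Require Import finmap.
From mathcomp Require Import reals.
From mathcomp Require Import lra zify.
From Stdlib Require Import Classical.
(* A finite set surrounds the origin iff it is positively dependent and spans the
   whole space, and every point of a positively dependent set lies in a positive
   circuit (an affinely independent positively dependent subset, i.e. a critical
   simplex). A circuit of k+1 points spans a k-dimensional space, already spanned by
   any k of its points. So a minimally surrounding set is the union of a largest
   circuit it contains and of circuits through points outside the span obtained so
   far, and dimension counting leaves the four listed shapes plus two disjoint
   triangles in distinct planes; in that last configuration the line where the planes
   meet yields a smaller surrounding subset. *)

Set Implicit Arguments. Unset Strict Implicit. Unset Printing Implicit Defensive.
Import Order.TTheory GRing.Theory Num.Theory.
Local Open Scope fset_scope.
Local Open Scope ring_scope.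

Lemma seq_argmin (T : eqType) (R : realDomainType) (s : seq T) (f : T -> R) :
  s != [::] -> exists2 x, x \in s & forall y, y \in s -> f x <= f y.
Proof.
elim: s => // a [|b s] IH _.
  by exists a => [|y]; rewrite ?mem_seq1 // => /eqP ->.
have [//|x xs Hx] := IH.
have [fax|fxa] := lerP (f a) (f x).
  exists a; first exact: mem_head.
  by move=> y; rewrite in_cons => /orP[/eqP -> //|/Hx]; apply: le_trans.
exists x; first by rewrite in_cons xs orbT.
by move=> y; rewrite in_cons => /orP[/eqP ->|/Hx //]; apply: ltW.
Qed.

Lemma seq_argmin_pred (T : eqType) (R : realDomainType) (s : seq T) (P : pred T)
    (f : T -> R) : has P s ->
  exists2 x, x \in s /\ P x & forall y, y \in s -> P y -> f x <= f y.
Proof.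
rewrite has_filter => /(seq_argmin f)[x]; rewrite mem_filter => /andP[Px xs] Hx.
by exists x => // y ys Py; apply: Hx; rewrite mem_filter Py.
Qed.

Lemma seq_pos_lbound (T : eqType) (R : realDomainType) (s : seq T) (f : T -> R) :
  (forall x, x \in s -> 0 < f x) -> exists2 m, 0 < m & forall x, x \in s -> m <= f x.
Proof.
have [-> _|/(seq_argmin f)[x xs Hx] f_gt0] := eqVneq s [::]; first by exists 1.
by exists (f x); [apply: f_gt0 | apply: Hx].
Qed.

Section Dependence.
Variables (R : realType) (n : nat).
Notation pt := 'rV[R]_n.
Notation fspan T := (<<enum_fset T>>%VS).

Definition posdep (T : {fset pt}) : Prop :=
  exists w : pt -> R, (forall v, v \in T -> 0 < w v) /\ \sum_(v <- T) w v *: v = 0.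

Definition support (T : {fset pt}) (w : pt -> R) : {fset pt} := [fset v in T | w v != 0].

Lemma support_sub (T : {fset pt}) w : support T w `<=` T.
Proof. by apply/fsubsetP => v; rewrite !inE => /andP[]. Qed.

Lemma big_fset_if (V : nmodType) (A B : {fset pt}) (F : pt -> V) : A `<=` B ->
  \sum_(v <- B) (if v \in A then F v else 0) = \sum_(v <- A) F v.
Proof.
move=> AB; rewrite -(big_fset_incl _ AB); last by move=> v _ /negbTE ->.
by apply: eq_big_seq => v ->.
Qed.

Lemma sum_scale_if (A B : {fset pt}) (w : pt -> R) : A `<=` B ->
  \sum_(v <- B) (if v \in A then w v else 0) *: v = \sum_(v <- A) w v *: v.
Proof.
move=> AB; rewrite -(big_fset_if _ AB).
by apply: eq_bigr => v _; case: ifP; rewrite ?scale0r.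
Qed.

Lemma sum_scale_if_disjoint (A B : {fset pt}) (f g : pt -> R) : [disjoint A & B] ->
  \sum_(v <- A `|` B) (if v \in A then f v else g v) *: v =
  \sum_(v <- A) f v *: v + \sum_(v <- B) g v *: v.
Proof.
move=> /fdisjointP dAB.
rewrite -(sum_scale_if f (fsubsetUl A B)) -(sum_scale_if g (fsubsetUr A B)).
rewrite -big_split /= big_seq [RHS]big_seq; apply: eq_bigr => v; rewrite in_fsetU.
case: (boolP (v \in A)) => [vA _|vA /= vB]; last by rewrite vB scale0r add0r.
by rewrite (negbTE (dAB _ vA)) scale0r addr0.
Qed.

Lemma posdep_support (T : {fset pt}) (w : pt -> R) :
  (forall v, v \in T -> 0 <= w v) -> \sum_(v <- T) w v *: v = 0 ->
  posdep (support T w).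
Proof.
move=> w_ge0 wT; exists w; split.
  by move=> v; rewrite !inE /= => /andP[vT nz]; rewrite lt_def nz w_ge0.
rewrite -[RHS]wT; apply: big_fset_incl; first exact: support_sub.
by move=> v vT; rewrite !inE /= vT /= negbK => /eqP ->; rewrite scale0r.
Qed.

Lemma posdepU (A B : {fset pt}) : posdep A -> posdep B -> posdep (A `|` B).
Proof.
move=> [wA [wA_gt0 sA]] [wB [wB_gt0 sB]].
pose cut (C : {fset pt}) (w : pt -> R) v := if v \in C then w v else 0.
have cut_ge0 (C : {fset pt}) (w : pt -> R) v :
    (forall u, u \in C -> 0 < w u) -> 0 <= cut C w v.
  by move=> w_gt0; rewrite /cut; case: ifP => // /w_gt0 /ltW.
exists (fun v => cut A wA v + cut B wB v); split.
  move=> v; rewrite in_fsetU => /orP[vA|vB].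
    by rewrite ltr_pwDl ?cut_ge0 // /cut vA wA_gt0.
  by rewrite ltr_wpDl ?cut_ge0 // /cut vB wB_gt0.
under eq_bigr do rewrite scalerDl.
by rewrite big_split /= !sum_scale_if ?fsubsetUl ?fsubsetUr // sA sB addr0.
Qed.

Lemma posdep_of_nonneg_deps (S : {fset pt}) :
  (forall v, v \in S -> exists w : pt -> R, [/\ forall u, u \in S -> 0 <= w u,
      \sum_(u <- S) w u *: u = 0 & 0 < w v]) -> posdep S.
Proof.
move=> deps.
suff /(_ (enum_fset S) (fun _ vS => vS)) [w [w_ge0 wS w_gt0]] :
    forall s : seq pt, {subset s <= S} -> exists w : pt -> R,
    [/\ forall u, u \in S -> 0 <= w u, \sum_(u <- S) w u *: u = 0
      & forall v, v \in s -> 0 < w v].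
  by exists w.
elim=> [|a s IH] sS.
  exists (fun=> 0); split => //.
  by rewrite big1 // => u _; rewrite scale0r.
have [|w [w_ge0 wS w_gt0]] := IH; first by move=> v vs; apply: sS; rewrite inE vs orbT.
have aS : a \in S by apply: sS; rewrite inE eqxx.
have [wa [wa_ge0 waS wa_gt0]] := deps a aS.
exists (fun u => w u + wa u); split.
- by move=> u uS; rewrite addr_ge0 ?w_ge0 ?wa_ge0.
- by under eq_bigr do rewrite scalerDl; rewrite big_split /= wS waS addr0.
- move=> v; rewrite inE => /orP[/eqP ->|vs]; first by rewrite ltr_wpDl ?w_ge0.
  by rewrite ltr_pwDl ?w_gt0 // wa_ge0 //; apply: sS; rewrite inE vs orbT.
Qed.

(* The coordinate of [x] along [v] w.r.t. the list of points of [T]; it is [0]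
   when [v \notin T]. *)
Definition fcoord (T : {fset pt}) (v x : pt) : R :=
  oapp (fun i => coord (in_tuple (enum_fset T)) i x) 0 (insub (index v (enum_fset T))).

Lemma big_fset_tnth (T : {fset pt}) (F : pt -> pt) :
  \sum_(v <- T) F v = \sum_(i < size (enum_fset T)) F (tnth (in_tuple (enum_fset T)) i).
Proof.
rewrite (big_nth 0) big_mkord; apply: eq_bigr => i _.
by rewrite (tnth_nth 0).
Qed.

Lemma fcoord_tnth (T : {fset pt}) i x :
  fcoord T (tnth (in_tuple (enum_fset T)) i) x = coord (in_tuple (enum_fset T)) i x.
Proof. by rewrite /fcoord (tnth_nth 0) /= index_uniq ?fset_uniq // valK. Qed.

Lemma fcoordK (T : {fset pt}) x : x \in fspan T ->
  \sum_(v <- T) fcoord T v x *: v = x.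
Proof.
move=> xT; rewrite {2}(@coord_span _ _ _ (in_tuple (enum_fset T)) x xT).
rewrite big_fset_tnth; apply: eq_bigr => i _.
by rewrite -(tnth_nth 0) fcoord_tnth.
Qed.

Lemma fspan_sum (T : {fset pt}) (w : pt -> R) : \sum_(v <- T) w v *: v \in fspan T.
Proof. by rewrite big_seq rpred_sum // => v vT; rewrite rpredZ ?memv_span. Qed.

Lemma fspanP (T : {fset pt}) x :
  reflect (exists w : pt -> R, \sum_(v <- T) w v *: v = x) (x \in fspan T).
Proof.
apply: (iffP idP) => [xT|[w <-]]; last exact: fspan_sum.
by exists (fcoord T ^~ x); apply: fcoordK.
Qed.

Lemma fcoord_expand (T : {fset pt}) v (x : pt) :
  fcoord T v x = \sum_j x ord0 j * fcoord T v (delta_mx ord0 j).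
Proof.
rewrite /fcoord; case: insubP => [i _ _|_] /=; last first.
  by rewrite big1 // => j _; rewrite mulr0.
rewrite {1}(row_sum_delta x) linear_sum; apply: eq_bigr => j _.
by rewrite linearZ.
Qed.

Lemma fcoord_bound (T : {fset pt}) v (x : pt) (e : R) : (forall i, `|x ord0 i| <= e) ->
  `|fcoord T v x| <= e * \sum_j `|fcoord T v (delta_mx ord0 j)|.
Proof.
move=> x_le; rewrite fcoord_expand mulr_sumr; apply: le_trans (ler_norm_sum _ _ _) _.
by apply: ler_sum => j _; rewrite normrM ler_wpM2r.
Qed.

Definition lin_independent (T : {fset pt}) : Prop :=
  forall w : pt -> R, \sum_(v <- T) w v *: v = 0 -> forall v, v \in T -> w v = 0.

Lemma lin_independent_free (T : {fset pt}) : lin_independent T -> free (enum_fset T).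
Proof.
move=> indepT; apply/(@freeP _ _ _ (in_tuple (enum_fset T))) => k k0 i.
pose w v := oapp k 0 (insub (index v (enum_fset T))).
have w_tnth j : w (tnth (in_tuple (enum_fset T)) j) = k j.
  by rewrite /w (tnth_nth 0) /= index_uniq ?fset_uniq // valK.
have wT : \sum_(v <- T) w v *: v = 0.
  by rewrite big_fset_tnth -[RHS]k0; apply: eq_bigr => j _; rewrite w_tnth (tnth_nth 0).
by rewrite -w_tnth; apply: (indepT w wT); rewrite (tnth_nth 0) mem_nth.
Qed.

Lemma dim_fspan_lin_independent (T : {fset pt}) :
  lin_independent T -> \dim (fspan T) = #|` T|.
Proof. by move/lin_independent_free/eqP. Qed.

Lemma fspanS (A B : {fset pt}) : A `<=` B -> (fspan A <= fspan B)%VS.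
Proof. by move=> AB; apply: sub_span => x; apply: (fsubsetP AB). Qed.

Lemma fspanU (A B : {fset pt}) : fspan (A `|` B) = (fspan A + fspan B)%VS.
Proof.
apply/eqP; rewrite eqEsubv subv_add !fspanS ?fsubsetUl ?fsubsetUr ?andbT //.
apply/span_subvP => x; rewrite in_fsetU => /orP[xA|xB].
  by rewrite (subvP (addvSl _ _)) ?memv_span.
by rewrite (subvP (addvSr _ _)) ?memv_span.
Qed.

Lemma dimv_le (U : {vspace pt}) : (\dim U <= n)%N.
Proof. by have := dimvS (subvf U); rewrite dimvf /dim /= mul1n. Qed.

Lemma dimv_full (U : {vspace pt}) : (n <= \dim U)%N -> U = fullv.
Proof. by move=> U_ge; apply/eqP; rewrite eqEdim subvf dimvf /dim /= mul1n. Qed.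

Lemma dimv_ltD (U V : {vspace pt}) : ~~ (V <= U)%VS -> (\dim U < \dim (U + V))%N.
Proof. by rewrite (ltn_leqif (dimv_leqif_sup (addvSl U V))) subv_add subvv. Qed.

Lemma exists_notin_subspace (S : {fset pt}) (U : {vspace pt}) :
  fspan S = fullv -> (\dim U < n)%N -> exists2 x, x \in S & x \notin U.
Proof.
move=> spanS dimU; apply: NNPP => noS.
have : (fspan S <= U)%VS.
  by apply/span_subvP => x xS; apply: NNPP => /negP xU; apply: noS; exists x.
by rewrite spanS => /dimvS; rewrite dimvf /dim /= mul1n leqNgt dimU.
Qed.

Lemma le_big_fset (T : {fset pt}) (f : pt -> R) v : v \in T ->
  (forall u, u \in T -> 0 <= f u) -> f v <= \sum_(u <- T) f u.
Proof.
move=> vT f_ge0; rewrite (big_fsetD1 v vT) /= lerDl big_seq sumr_ge0 // => u.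
by rewrite in_fsetD1 => /andP[_ /f_ge0].
Qed.

Lemma exists_small_multiple (x : pt) (e : R) : 0 < e ->
  exists2 c, 0 < c & forall i, `|(c *: x) ord0 i| < e.
Proof.
move=> e_gt0; set s := \sum_j `|x ord0 j|.
have s_ge0 : 0 <= s by rewrite sumr_ge0.
have c_gt0 : 0 < e / (1 + s) by rewrite divr_gt0 // ltr_pwDl.
exists (e / (1 + s)) => // i; rewrite mxE normrM (gtr0_norm c_gt0).
have xi_le : `|x ord0 i| <= s by rewrite /s (bigD1 i) //= lerDl sumr_ge0.
apply: le_lt_trans (ler_wpM2l (ltW c_gt0) xi_le) _.
by rewrite mulrAC ltr_pdivrMr ?ltr_pwDl // mulrDr mulr1; lra.
Qed.

Lemma surrounds_full_span (S : {fset pt}) : surrounds S -> fspan S = fullv.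
Proof.
move=> [e e_gt0 convS]; apply/eqP; rewrite eqEsubv subvf /=; apply/subvP => x _.
have [c c_gt0 small] := exists_small_multiple x e_gt0.
have [w [_ [_ wS]]] := convS _ small.
have cxS : c *: x \in fspan S by rewrite -wS fspan_sum.
by move/(memvZ c^-1): cxS; rewrite scalerA mulVf ?scale1r ?gt_eqF.
Qed.

Lemma surrounds_posdep (S : {fset pt}) : surrounds S -> posdep S.
Proof.
move=> [e e_gt0 convS]; apply: posdep_of_nonneg_deps => v vS.
have [c c_gt0 small] := exists_small_multiple (- v) e_gt0.
have [w [w_ge0 [_ wS]]] := convS _ small.
exists (fun u => w u + (if u \in [fset v] then c else 0)); split.
- by move=> u uS; rewrite addr_ge0 ?w_ge0 //; case: ifP => _ //; apply: ltW.
- under eq_bigr do rewrite scalerDl.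
  by rewrite big_split /= wS sum_scale_if ?fsub1set // big_seq_fset1 scalerN addNr.
- by rewrite inE eqxx ltr_wpDl ?w_ge0.
Qed.

Lemma posdep_ge1 (T : {fset pt}) : posdep T ->
  exists w : pt -> R, (forall v, v \in T -> 1 <= w v) /\ \sum_(v <- T) w v *: v = 0.
Proof.
move=> [l [l_gt0 lT]]; have [m m_gt0 m_le] := seq_pos_lbound l_gt0.
exists (fun v => l v / m); split; first by move=> v vT; rewrite ler_pdivlMr ?mul1r ?m_le.
by under eq_bigr do rewrite mulrC -scalerA; rewrite -scaler_sumr lT scaler0.
Qed.

Lemma fcoord_small (T : {fset pt}) (d : R) : 0 < d -> exists2 e, 0 < e &
  forall x : pt, (forall i, `|x ord0 i| < e) -> forall v, v \in T -> `|fcoord T v x| <= d.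
Proof.
move=> d_gt0; pose K := \sum_(v <- T) \sum_j `|fcoord T v (delta_mx ord0 j)|.
have K_ge0 : 0 <= K by apply: sumr_ge0 => v _; apply: sumr_ge0.
have e_gt0 : 0 < d / (K + 1) by rewrite divr_gt0 // ltr_wpDl.
exists (d / (K + 1)) => // x small v vT.
apply: le_trans (@fcoord_bound T v x _ (fun i => ltW (small i))) _.
have Kv_le : \sum_j `|fcoord T v (delta_mx ord0 j)| <= K.
  apply: (le_big_fset (f := fun u => \sum_j `|fcoord T u (delta_mx ord0 j)|) vT).
  by move=> u _; rewrite sumr_ge0.
apply: le_trans (ler_wpM2l (ltW e_gt0) Kv_le) _.
by rewrite mulrAC ler_pdivrMr ?ltr_wpDl // ler_pM2l // lerDl.
Qed.

Lemma posdep_surrounds_in_span (T : {fset pt}) : posdep T -> T != fset0 ->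
  surrounds_in_span T.
Proof.
move=> /posdep_ge1 [l [l_ge1 lT]] /fset0Pn [v0 v0T].
pose L := \sum_(v <- T) l v; pose N := \sum_(v <- T) (1 : R).
have L_ge1 : 1 <= L.
  apply: le_trans (l_ge1 _ v0T) _; apply: (le_big_fset (f := l) v0T) => v /l_ge1.
  exact: le_trans.
have N_ge0 : 0 <= N by rewrite sumr_ge0.
(* Coordinates of size at most [d] are absorbed by adding [t * l] with [t >= d]. *)
pose d := (N + L)^-1.
have d_gt0 : 0 < d by rewrite invr_gt0; lra.
have dNL : d * N + d * L = 1 by rewrite -mulrDr mulVf // gt_eqF //; lra.
have [e e_gt0 small] := fcoord_small T d_gt0.
exists e => // x /fspanP xT /small c_le.
pose c v := fcoord T v x.
have sum_c : \sum_(v <- T) c v <= d * N.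
  rewrite /N mulr_sumr big_seq [leRHS]big_seq; apply: ler_sum => v vT.
  by rewrite mulr1; apply: le_trans (ler_norm _) (c_le v vT).
pose t := (1 - \sum_(v <- T) c v) / L.
have d_le_t : d <= t.
  have dL_le : d * L <= 1 - \sum_(v <- T) c v by lra.
  by rewrite /t ler_pdivlMr //; lra.
exists (fun v => c v + t * l v); split; last split.
- move=> v vT; have := c_le v vT; rewrite ler_norml -/(c v) => /andP[c_ge _].
  have : t <= t * l v.
    by rewrite -{1}(mulr1 t) ler_pM2l ?l_ge1 //; apply: lt_le_trans d_le_t.
  move: d_le_t c_ge; lra.
- rewrite big_split /= -mulr_sumr -/L /t mulfVK; first by rewrite addrC subrK.
  by rewrite gt_eqF //; lra.
- under eq_bigr do rewrite scalerDl -scalerA.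
  by rewrite big_split /= fcoordK // -scaler_sumr lT scaler0 addr0.
Qed.

Lemma posdep_surrounds (T : {fset pt}) : (0 < n)%N -> posdep T -> fspan T = fullv ->
  surrounds T.
Proof.
move=> n_gt0 pT spanT; have T_neq0 : T != fset0.
  apply: contraTneq n_gt0 => T0; have := dim_span (enum_fset T).
  by rewrite spanT dimvf /dim /= mul1n T0 cardfs0 leqn0 => /eqP ->.
have [e e_gt0 convT] := posdep_surrounds_in_span pT T_neq0.
by exists e => // x; apply: convT; apply/fspanP; rewrite spanT memvf.
Qed.

Lemma minimal_posdep_eq (S T : {fset pt}) : (0 < n)%N -> minimally_surrounds S ->
  T `<=` S -> posdep T -> fspan T = fullv -> T = S.
Proof.
move=> n_gt0 [_ minS] TS pT spanT; apply: NNPP => /eqP TS'.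
by apply: (minS T); [rewrite fproperEneq TS' TS | apply: posdep_surrounds].
Qed.

Lemma exists_pos_of_sum0 (T : {fset pt}) (w : pt -> R) u : u \in T -> w u != 0 ->
  \sum_(v <- T) w v = 0 -> exists2 v, v \in T & 0 < w v.
Proof.
move=> uT wu0 wT; apply: NNPP => no_pos.
have w_le0 v : v \in T -> 0 <= - w v.
  by move=> vT; rewrite oppr_ge0 leNgt; apply/negP => ?; apply: no_pos; exists v.
have /eqP := wT; rewrite -oppr_eq0 -sumrN big_seq psumr_eq0 => [/allP/(_ u uT)|].
  by rewrite uT oppr_eq0 (negbTE wu0).
exact: w_le0.
Qed.

(* Moving along a dependence [w] until the first coefficient of the positive
   dependence vanishes keeps every point where [w] is nonpositive. *)
Lemma posdep_shrink (T : {fset pt}) (w : pt -> R) : posdep T ->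
  \sum_(v <- T) w v *: v = 0 -> (exists2 u, u \in T & 0 < w u) ->
  exists T', [/\ T' `<` T, posdep T' & forall v, v \in T -> w v <= 0 -> v \in T'].
Proof.
move=> [l [l_gt0 lT]] wT [u uT wu_gt0].
have [|u0 [u0T wu0_gt0] u0_min] := seq_argmin_pred (s := enum_fset T)
  (P := fun v => 0 < w v) (fun v => l v / w v); first by apply/hasP; exists u.
pose t := l u0 / w u0.
have t_gt0 : 0 < t by rewrite divr_gt0 // l_gt0.
pose mu v := l v - t * w v.
have mu_ge0 v : v \in T -> 0 <= mu v.
  move=> vT; rewrite subr_ge0; case: (ltrP 0 (w v)) => wv.
    by rewrite -ler_pdivlMr // u0_min.
  by apply: le_trans (ltW (l_gt0 _ vT)); rewrite pmulr_rle0.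
have muT : \sum_(v <- T) mu v *: v = 0.
  under eq_bigr do rewrite /mu scalerBl -scalerA.
  by rewrite sumrB -scaler_sumr lT wT scaler0 subr0.
exists (support T mu); split.
- rewrite fproperEneq support_sub andbT; apply/eqP => /fsetP/(_ u0).
  by rewrite !inE u0T /= /mu /t divfK ?subrr ?eqxx // gt_eqF.
- exact: posdep_support.
- move=> v vT wv_le0; rewrite !inE vT /= /mu gt_eqF //.
  by rewrite subr_gt0; apply: le_lt_trans (l_gt0 _ vT); rewrite pmulr_rle0.
Qed.

Definition pos_circuit (C : {fset pt}) : Prop :=
  [/\ C != fset0, posdep C & affinely_independent C].

Lemma posdep_circuit_cover (T : {fset pt}) v : posdep T -> v \in T ->
  exists C, [/\ C `<=` T, pos_circuit C & v \in C].
Proof.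
move: {2}#|` T| (leqnn #|` T|) => k; elim: k T v => [|k IH] T v Tk pT vT.
  by move: Tk; rewrite leqn0 cardfs_eq0 => /eqP T0; rewrite T0 inE in vT.
have [indepT|/not_all_ex_not[w]] := classic (affinely_independent T).
  by exists T; split => //; split => //; apply/fset0Pn; exists v.
move=> /not_all_ex_not[wT] /not_all_ex_not[w1] /not_all_ex_not[u] /not_all_ex_not[uT wu0].
have [T' [T'T pT' vT']] : exists T', [/\ T' `<` T, posdep T' & v \in T'].
  have [wv_le0|wv_gt0] := lerP (w v) 0.
    have w_pos := exists_pos_of_sum0 uT (introN eqP wu0) w1.
    have [T' [? ? sub]] := posdep_shrink pT wT w_pos.
    by exists T'; split => //; apply: sub.
  have w'T : \sum_(v <- T) (- w v) *: v = 0.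
    by under eq_bigr do rewrite scaleNr; rewrite sumrN wT oppr0.
  have w'1 : \sum_(v <- T) - w v = 0 by rewrite sumrN w1 oppr0.
  have [|T' [? ? sub]] := posdep_shrink pT w'T.
    by apply: (exists_pos_of_sum0 uT _ w'1); rewrite oppr_eq0; apply/eqP.
  by exists T'; split => //; apply: sub; rewrite // oppr_le0 ltW.
have T'k : (#|` T'| <= k)%N by rewrite -ltnS (leq_trans (fproper_ltn_card T'T)).
have [C [CT' ? ?]] := IH T' v T'k pT' vT'.
by exists C; split => //; apply: fsubset_trans CT' (fproper_sub T'T).
Qed.

Lemma pos_circuit_lin_independent (C D : {fset pt}) : pos_circuit C -> D `<` C ->
  lin_independent D.
Proof.
move=> [_ [l [l_gt0 lC]] indepC] DC w wD v vD.
pose w' v := if v \in D then w v else 0.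
have w'C : \sum_(v <- C) w' v *: v = 0 by rewrite sum_scale_if ?fproper_sub.
have w'1 : \sum_(v <- C) w' v = \sum_(v <- D) w v by rewrite big_fset_if ?fproper_sub.
have vC : v \in C by apply: (fsubsetP (fproper_sub DC)).
have [s0|s_neq0] := eqVneq (\sum_(v <- D) w v) 0.
  by have := indepC w' w'C (etrans w'1 s0) v vC; rewrite /w' vD.
(* Otherwise [w / s - l / L] is an affine dependence of [C] that does not vanish
   at a point of [C] outside [D]. *)
have /fsubsetPn [c cC cD] : ~~ (C `<=` D).
  by apply: contraTN DC => CD; rewrite fproperE CD andbF.
pose L := \sum_(v <- C) l v.
have L_gt0 : 0 < L.
  apply: lt_le_trans (l_gt0 _ cC) _; apply: (le_big_fset (f := l) cC) => u.
  by move/l_gt0/ltW.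
pose a x := w' x / (\sum_(v <- D) w v) - l x / L.
have aC : \sum_(v <- C) a v *: v = 0.
  under eq_bigr do rewrite /a scalerBl mulrC -scalerA [l _ / L]mulrC -scalerA.
  by rewrite sumrB -!scaler_sumr w'C lC !scaler0 subr0.
have a1 : \sum_(v <- C) a v = 0.
  by rewrite /a sumrB -!mulr_suml w'1 -/L !mulfV // ?subrr // gt_eqF.
have := indepC a aC a1 c cC; rewrite /a /w' (negbTE cD) mul0r sub0r => /eqP.
by rewrite oppr_eq0 mulf_eq0 invr_eq0 !gt_eqF ?l_gt0.
Qed.

Lemma fspan_circuitD1 (C : {fset pt}) c : pos_circuit C -> c \in C ->
  fspan (C `\ c) = fspan C.
Proof.
move=> [_ [l [l_gt0 lC]] _] cC; apply/eqP; rewrite eqEsubv fspanS ?fsubD1set //=.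
apply/span_subvP => x xC; have [->|xc] := eqVneq x c; last first.
  by rewrite memv_span // in_fsetD1 xc.
move: lC; rewrite (big_fsetD1 c cC) /= => /eqP; rewrite addr_eq0 => /eqP lc.
have : (l c)^-1 *: (l c *: c) \in fspan (C `\ c) by rewrite memvZ // lc memvN fspan_sum.
by rewrite scalerA mulVf ?scale1r // gt_eqF ?l_gt0.
Qed.

Lemma dim_fspan_circuit (C : {fset pt}) : pos_circuit C -> \dim (fspan C) = (#|` C|).-1.
Proof.
move=> circC; have [/fset0Pn [c cC] _ _] := circC.
rewrite -(fspan_circuitD1 circC cC) dim_fspan_lin_independent.
  by rewrite [in RHS](cardfsD1 c) cC.
exact: pos_circuit_lin_independent circC (fproperD1 cC).
Qed.

Lemma fspan_circuit_sub (C D : {fset pt}) : pos_circuit C -> D `<=` C ->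
  (#|` C| <= (#|` D|).+1)%N -> fspan D = fspan C.
Proof.
move=> circC DC C_le; have [->//|D_neq] := eqVneq D C.
have DC' : D `<` C by rewrite fproperEneq D_neq DC.
apply/eqP; rewrite eqEdim fspanS //= dim_fspan_circuit //.
rewrite (dim_fspan_lin_independent (pos_circuit_lin_independent circC DC')).
by rewrite -subn1 leq_subLR add1n.
Qed.

Lemma pos_circuit_card_ge2 (C : {fset pt}) x : pos_circuit C -> x \in C -> x != 0 ->
  (2 <= #|` C|)%N.
Proof.
move=> [C_neq0 [l [l_gt0 lC]] _] xC x_neq0; rewrite ltnNge; apply/negP => C_le1.
have /cardfs1P [y Cy] : #|` C| == 1%N by rewrite eqn_leq C_le1 cardfs_gt0.
have xy : x = y by apply/eqP; rewrite -in_fset1 -Cy.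
move: lC; rewrite Cy big_seq_fset1 -xy => /eqP; rewrite scaler_eq0 (negbTE x_neq0) orbF.
by rewrite gt_eqF ?l_gt0.
Qed.

Lemma pos_circuit_card_le (C : {fset pt}) : pos_circuit C -> (#|` C| <= n.+1)%N.
Proof.
move=> circC; have := dimv_le (fspan C).
by rewrite dim_fspan_circuit // -ltnS; case: #|` C|.
Qed.

Lemma pos_circuit_meet_card (C T : {fset pt}) : pos_circuit C ->
  ~~ (fspan C <= fspan T)%VS -> ((#|` C `&` T|).+2 <= #|` C|)%N.
Proof.
move=> circC CT; rewrite ltnNge; apply: contra CT => C_le.
by rewrite -(fspan_circuit_sub circC (fsubsetIl C T) C_le) fspanS ?fsubsetIr.
Qed.

Lemma pos_circuit_critical (C : {fset pt}) k : pos_circuit C -> #|` C| = k.+1 ->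
  critical k C.
Proof.
by move=> [C_neq0 pC indepC] Ck; split; [split | apply: posdep_surrounds_in_span].
Qed.

Lemma fspan_not_subv (Q : {fset pt}) (U : {vspace pt}) y : y \in Q -> y \notin U ->
  ~~ (fspan Q <= U)%VS.
Proof. by move=> yQ; apply: contra => /subvP; apply; apply: memv_span. Qed.

Lemma dim_fspanU_gt (A B : {fset pt}) : ~~ (fspan B <= fspan A)%VS ->
  (\dim (fspan A) < \dim (fspan (A `|` B)))%N.
Proof. by rewrite fspanU; apply: dimv_ltD. Qed.

Lemma exists_circuit_not_in (S : {fset pt}) (U : {vspace pt}) : surrounds S ->
  (\dim U < n)%N ->
  exists C, [/\ C `<=` S, pos_circuit C, ~~ (fspan C <= U)%VS & (2 <= #|` C|)%N].
Proof.
move=> sS dimU; have [x xS xU] := exists_notin_subspace (surrounds_full_span sS) dimU.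
have [C [CS circC xC]] := posdep_circuit_cover (surrounds_posdep sS) xS.
exists C; split; rewrite ?(fspan_not_subv xC xU) //.
by apply: pos_circuit_card_ge2 circC xC _; apply: contraNneq xU => ->; rewrite mem0v.
Qed.

Lemma nonneg_repr_vanishing (T : {fset pt}) x : posdep T -> T != fset0 ->
  x \in fspan T -> exists b : pt -> R, [/\ forall v, v \in T -> 0 <= b v,
    \sum_(v <- T) b v *: v = x & exists2 p, p \in T & b p = 0].
Proof.
move=> [l [l_gt0 lT]] /fset0Pn [v0 v0T] /fspanP [a aT].
have [|p pT p_min] := @seq_argmin _ _ (enum_fset T) (fun v => a v / l v).
  by move: v0T; rewrite -[v0 \in T]/(v0 \in enum_fset T); case: (enum_fset T).
pose t := a p / l p.
exists (fun v => a v - t * l v); split.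
- by move=> v vT; rewrite subr_ge0 -ler_pdivlMr ?l_gt0 // p_min.
- under eq_bigr do rewrite scalerBl -scalerA.
  by rewrite sumrB -scaler_sumr lT scaler0 subr0.
- by exists p => //; rewrite /t divfK ?subrr // gt_eqF ?l_gt0.
Qed.

Lemma posdep_opp_combination (T : {fset pt}) a : posdep T -> a \in T ->
  exists w : pt -> R, (forall v, v \in T `\ a -> 0 < w v) /\
    \sum_(v <- T `\ a) w v *: v = - a.
Proof.
move=> [l [l_gt0 lT]] aT; exists (fun v => l v / l a); split.
  by move=> v /fsetD1P [_ vT]; rewrite divr_gt0 ?l_gt0.
move: lT; rewrite (big_fsetD1 a aT) /= addrC => /eqP; rewrite addr_eq0 => /eqP la.
under eq_bigr do rewrite mulrC -scalerA.
by rewrite -scaler_sumr la scalerN scalerA mulVf ?scale1r // gt_eqF ?l_gt0.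
Qed.

Lemma posdep_disjointU (A B : {fset pt}) (wA wB : pt -> R) : [disjoint A & B] ->
  (forall v, v \in A -> 0 < wA v) -> (forall v, v \in B -> 0 < wB v) ->
  \sum_(v <- A) wA v *: v + \sum_(v <- B) wB v *: v = 0 -> posdep (A `|` B).
Proof.
move=> dAB wA_gt0 wB_gt0 wAB; exists (fun v => if v \in A then wA v else wB v).
split; last by rewrite sum_scale_if_disjoint.
move=> v; case: ifP => [/wA_gt0 //|vA]; rewrite in_fsetU vA; exact: wB_gt0.
Qed.

Lemma triangle_pair_dim (T : {fset pt}) (U : {vspace pt}) x y : pos_circuit T ->
  #|` T| = 3%N -> x \in T -> y \in T -> x != y -> x \in U -> y \in U -> (2 <= \dim U)%N.
Proof.
move=> circT T3 xT yT xy xU yU.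
have xyT : [fset x; y] `<=` T by apply/fsubsetP => z; rewrite !inE => /orP[]/eqP->.
have := fspan_circuit_sub circT xyT; rewrite cardfs2 xy T3 => /(_ isT) span_xy.
have : (fspan T <= U)%VS.
  by rewrite -span_xy; apply/span_subvP => z; rewrite !inE => /orP[]/eqP->.
by move/dimvS; rewrite dim_fspan_circuit // T3.
Qed.

Lemma triangle_combination_on_line (T : {fset pt}) (U : {vspace pt}) (b : pt -> R) :
  pos_circuit T -> #|` T| = 3%N -> (\dim U <= 1)%N ->
  (forall v, v \in T -> b v != 0 -> v \in U) -> \sum_(v <- T) b v *: v != 0 ->
  exists2 a, a \in T & \sum_(v <- T) b v *: v = b a *: a.
Proof.
move=> circT T3 dimU bU bT_neq0.
have [a aT ba] : exists2 a, a \in T & b a != 0.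
  apply: NNPP => no_a; move: bT_neq0; rewrite big_seq big1 ?eqxx // => v vT.
  by have [->|bv] := eqVneq (b v) 0; [rewrite scale0r | case: no_a; exists v].
exists a => //; rewrite (big_fsetD1 a aT) /= big_seq big1 ?addr0 // => v /fsetD1P [va vT].
have [bv|bv] := eqVneq (b v) 0; first by rewrite bv scale0r.
have := triangle_pair_dim circT T3 vT aT va (bU v vT bv) (bU a aT ba).
by rewrite leqNgt ltnS dimU.
Qed.

Lemma fdisjoint_card0 (A B : {fset pt}) : #|` A `&` B| = 0%N -> [disjoint A & B].
Proof. by move/eqP; rewrite cardfs_eq0 fsetI_eq0. Qed.
End Dependence.

Section Space.
Variable R : realType.
Notation pt := 'rV[R]_3.
Notation fspan T := (<<enum_fset T>>%VS).

Lemma minimal_circuit4_eq (S C : {fset pt}) : minimally_surrounds S -> C `<=` S ->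
  pos_circuit C -> #|` C| = 4%N -> C = S.
Proof.
move=> mS CS circC C4; have [_ pC _] := circC.
apply: minimal_posdep_eq mS CS pC _ => //.
by apply: dimv_full; rewrite dim_fspan_circuit // C4.
Qed.

(* If [a] and [b] give a nonnegative dependence of [A `|` B] in which [b] vanishes
   somewhere, then the points of [B] used by [b] stay in the plane of [A]: otherwise
   [A] and the support would surround the origin without that vanishing point. *)
Lemma support_in_plane (S A B : {fset pt}) (a b : pt -> R) q :
  minimally_surrounds S -> S = A `|` B -> [disjoint A & B] -> posdep A ->
  \dim (fspan A) = 2%N -> (forall v, v \in A -> 0 <= a v) ->
  (forall v, v \in B -> 0 <= b v) ->
  \sum_(v <- A) a v *: v + \sum_(v <- B) b v *: v = 0 -> q \in B -> b q = 0 ->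
  forall y, y \in B -> b y != 0 -> y \in fspan A.
Proof.
move=> mS SAB dAB pA dimA a_ge0 b_ge0 abS qB bq y yB by0; apply: NNPP => /negP yA.
have /fdisjointP_sym BnA := dAB.
pose nu v := if v \in A then a v else b v.
have nu_ge0 v : v \in S -> 0 <= nu v.
  by rewrite SAB /nu in_fsetU; case: ifP => [/a_ge0 //|_ /= /b_ge0].
have nuS : \sum_(v <- S) nu v *: v = 0 by rewrite SAB sum_scale_if_disjoint.
have yQ : y \in support S nu by rewrite !inE SAB in_fsetU yB orbT /nu (negbTE (BnA y yB)).
have AQ : A `|` support S nu = S.
  apply: minimal_posdep_eq mS _ (posdepU pA (posdep_support nu_ge0 nuS)) _ => //.
    by rewrite fsubUset support_sub SAB fsubsetUl.
  by apply: dimv_full; have := dim_fspanU_gt (fspan_not_subv yQ yA); rewrite dimA.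
have : q \in A `|` support S nu by rewrite AQ SAB in_fsetU qB orbT.
by rewrite !inE (negbTE (BnA q qB)) /nu (negbTE (BnA q qB)) bq eqxx !andbF.
Qed.

(* Replacing [a1] and [a2] by the other points of their circuits keeps a positive
   dependence and the full span, but drops [a1]. *)
Lemma opposite_vertices_not_minimal (S T1 T2 : {fset pt}) a1 a2 (c1 c2 : R) :
  minimally_surrounds S -> S = T1 `|` T2 -> [disjoint T1 & T2] ->
  pos_circuit T1 -> pos_circuit T2 -> (fspan T1 + fspan T2)%VS = fullv ->
  a1 \in T1 -> a2 \in T2 -> 0 < c1 -> 0 < c2 -> c1 *: a1 + c2 *: a2 = 0 -> False.
Proof.
move=> mS S12 d12 circ1 circ2 full a1T1 a2T2 c1_gt0 c2_gt0 c12.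
have [[_ p1 _] [_ p2 _]] := (circ1, circ2).
have [w1 [w1_gt0 w1S]] := posdep_opp_combination p1 a1T1.
have [w2 [w2_gt0 w2S]] := posdep_opp_combination p2 a2T2.
pose Q := (T1 `\ a1) `|` (T2 `\ a2).
have pQ : posdep Q.
  apply: (@posdep_disjointU _ _ _ _ (fun v => c1 * w1 v) (fun v => c2 * w2 v)).
  - by apply: fdisjointWl (fsubD1set _ _) _; apply: fdisjointWr (fsubD1set _ _) d12.
  - by move=> v /w1_gt0; apply: mulr_gt0.
  - by move=> v /w2_gt0; apply: mulr_gt0.
  under eq_bigr do rewrite -scalerA; under [X in _ + X]eq_bigr do rewrite -scalerA.
  by rewrite -!scaler_sumr w1S w2S !scalerN -opprD c12 oppr0.
have spanQ : fspan Q = fullv by rewrite fspanU !fspan_circuitD1.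
have QS : Q `<=` S by rewrite S12 fsetUSS ?fsubD1set.
have /fsetP/(_ a1) : Q = S by apply: minimal_posdep_eq mS QS pQ spanQ.
by rewrite S12 !inE eqxx a1T1 /= (negbTE (fdisjointP d12 _ a1T1)) andbF.
Qed.

(* The two planes meet in a line spanned by [u]. Writing [u] and [-u] as vanishing
   nonnegative combinations of the two triangles, both combinations live on that line,
   hence on a single vertex each, which [opposite_vertices_not_minimal] excludes. *)
Lemma disjoint_triangles_coplanar (S T1 T2 : {fset pt}) : minimally_surrounds S ->
  S = T1 `|` T2 -> [disjoint T1 & T2] -> pos_circuit T1 -> pos_circuit T2 ->
  #|` T1| = 3%N -> #|` T2| = 3%N -> (fspan T2 <= fspan T1)%VS.
Proof.
move=> mS S12 d12 circ1 circ2 T1_3 T2_3; apply/negPn/negP => n21.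
have [[T1_neq0 p1 _] [T2_neq0 p2 _]] := (circ1, circ2).
have [dim1 dim2] : \dim (fspan T1) = 2%N /\ \dim (fspan T2) = 2%N.
  by rewrite !dim_fspan_circuit ?T1_3 ?T2_3.
have full : (fspan T1 + fspan T2)%VS = fullv.
  by apply: dimv_full; have := dimv_ltD n21; rewrite dim1.
have dimL : \dim (fspan T1 :&: fspan T2) = 1%N.
  have := dimv_sum_cap (fspan T1) (fspan T2).
  by rewrite full dimvf /dim /= dim1 dim2; lia.
pose u := vpick (fspan T1 :&: fspan T2).
have u_neq0 : u != 0 by rewrite vpick0 -dimv_eq0 dimL.
have /memv_capP [uT1 uT2] : u \in (fspan T1 :&: fspan T2)%VS by apply: memv_pick.
have [b [b_ge0 bT1 [p pT1 bp]]] := nonneg_repr_vanishing p1 T1_neq0 uT1.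
have [g [g_ge0 gT2 [q qT2 gq]]] :=
  nonneg_repr_vanishing p2 T2_neq0 (etrans (memvN _ _) uT2).
have bg : \sum_(v <- T1) b v *: v + \sum_(v <- T2) g v *: v = 0 by rewrite bT1 gT2 subrr.
have b_line v : v \in T1 -> b v != 0 -> v \in (fspan T1 :&: fspan T2)%VS.
  move=> vT1 bv; rewrite memv_cap memv_span //.
  apply: (support_in_plane mS _ _ p2 dim2 g_ge0 b_ge0 _ pT1 bp) => //.
  - by rewrite S12 fsetUC.
  - by rewrite fdisjoint_sym.
  - by rewrite addrC.
have g_line v : v \in T2 -> g v != 0 -> v \in (fspan T1 :&: fspan T2)%VS.
  move=> vT2 gv; rewrite memv_cap [_ \in fspan T2]memv_span // andbT.
  exact: (support_in_plane mS S12 d12 p1 dim1 b_ge0 g_ge0 bg qT2 gq).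
have [|a1 a1T1 ba1] := triangle_combination_on_line circ1 T1_3 (eq_leq dimL) b_line.
  by rewrite bT1.
have [|a2 a2T2 ga2] := triangle_combination_on_line circ2 T2_3 (eq_leq dimL) g_line.
  by rewrite gT2 oppr_eq0.
have coef_gt0 (w : pt -> R) (T : {fset pt}) a : (forall v, v \in T -> 0 <= w v) ->
    a \in T -> w a *: a != 0 -> 0 < w a.
  by move=> w_ge0 aT; rewrite scaler_eq0 negb_or lt_def w_ge0 // andbT => /andP[].
apply: (opposite_vertices_not_minimal mS S12 d12 circ1 circ2 full a1T1 a2T2
  (coef_gt0 _ _ _ b_ge0 a1T1 _) (coef_gt0 _ _ _ g_ge0 a2T2 _)).
- by rewrite -ba1 bT1.
- by rewrite -ga2 gT2 oppr_eq0.
- by rewrite -ba1 -ga2 bT1 gT2 subrr.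
Qed.

Lemma minimally_surrounds_triangle (S T : {fset pt}) : minimally_surrounds S ->
  T `<=` S -> pos_circuit T -> #|` T| = 3%N ->
  (forall C, C `<=` S -> pos_circuit C -> (#|` C| <= 3)%N) ->
  (exists T1 T2 : {fset pt},
     [/\ critical 2 T1, critical 2 T2, S = T1 `|` T2 & #|` T1 `&` T2| = 1%N]) \/
  (exists T L : {fset pt},
     [/\ critical 2 T, critical 1 L, S = T `|` L & [disjoint T & L]]).
Proof.
move=> mS TS circT T3 C_le3; have [sS _] := mS; have [_ pT _] := circT.
have dimT : \dim (fspan T) = 2%N by rewrite dim_fspan_circuit // T3.
have [|C [CS circC CT C_ge2]] := exists_circuit_not_in (U := fspan T) sS.
  by rewrite dimT.
have [_ pC _] := circC.
have STC : S = T `|` C.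
  apply/esym/minimal_posdep_eq; rewrite ?fsubUset ?TS ?CS //; first exact: posdepU.
  by apply: dimv_full; have := dim_fspanU_gt CT; rewrite dimT.
have meet := pos_circuit_meet_card circC CT.
have := C_le3 C CS circC; rewrite leq_eqVlt ltnS => /orP[/eqP C3|C_le2].
  have [CT1|CT0] : #|` C `&` T| = 1%N \/ #|` C `&` T| = 0%N by lia.
    by left; exists T, C; split; rewrite 1?fsetIC //; apply: pos_circuit_critical.
  suff : (fspan C <= fspan T)%VS by rewrite (negbTE CT).
  apply: disjoint_triangles_coplanar mS STC _ circT circC T3 C3.
  by rewrite fdisjoint_sym fdisjoint_card0.
have [C2 CT0] : #|` C| = 2%N /\ #|` C `&` T| = 0%N by lia.
right; exists T, C; split; rewrite 1?fdisjoint_sym ?fdisjoint_card0 //.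
all: exact: pos_circuit_critical.
Qed.

Lemma minimally_surrounds_segments (S : {fset pt}) : minimally_surrounds S ->
  (forall C, C `<=` S -> pos_circuit C -> (#|` C| <= 2)%N) ->
  exists L1 L2 L3 : {fset pt}, [/\ critical 1 L1, critical 1 L2, critical 1 L3,
    S = L1 `|` L2 `|` L3 &
    [/\ [disjoint L1 & L2], [disjoint L1 & L3] & [disjoint L2 & L3]]].
Proof.
move=> mS C_le2; have [sS _] := mS.
have segment U : (\dim U < 3)%N -> exists C, [/\ C `<=` S, pos_circuit C,
    ~~ (fspan C <= U)%VS, #|` C| = 2%N & \dim (fspan C) = 1%N].
  move=> dimU; have [C [CS circC CU C_ge2]] := exists_circuit_not_in sS dimU.
  have C2 : #|` C| = 2%N by apply/eqP; rewrite eqn_leq C_le2.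
  by exists C; split; rewrite ?dim_fspan_circuit ?C2.
have [|C1 [C1S circ1 _ C1_2 dim1]] := segment 0%VS; first by rewrite dimv0.
have [|C2 [C2S circ2 C21 C2_2 dim2]] := segment (fspan C1); first by rewrite dim1.
have dim12 : \dim (fspan (C1 `|` C2)) = 2%N.
  apply/eqP; rewrite eqn_leq; have := dim_fspanU_gt C21; rewrite dim1 => -> /[!andbT].
  by rewrite fspanU; have := (dimv_add_leqif (fspan C1) (fspan C2)).1; rewrite dim1 dim2.
have [|C3 [C3S circ3 C3U C3_2 _]] := segment (fspan (C1 `|` C2)); first by rewrite dim12.
have [[[_ p1 _] [_ p2 _]] [_ p3 _]] := (circ1, circ2, circ3).
have S123 : S = C1 `|` C2 `|` C3.
  apply/esym/minimal_posdep_eq; rewrite ?fsubUset ?C1S ?C2S ?C3S //.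
    by apply: posdepU => //; apply: posdepU.
  by apply: dimv_full; have := dim_fspanU_gt C3U; rewrite dim12.
have /fdisjoint_card0 d21 : #|` C2 `&` C1| = 0%N.
  by have := pos_circuit_meet_card circ2 C21; rewrite C2_2; lia.
have /fdisjoint_card0 : #|` C3 `&` (C1 `|` C2)| = 0%N.
  by have := pos_circuit_meet_card circ3 C3U; rewrite C3_2; lia.
rewrite fdisjointXU => /andP[d31 d32].
exists C1, C2, C3; split; try exact: pos_circuit_critical; first done.
by split; rewrite fdisjoint_sym.
Qed.

End Space.

Theorem lemma20 (R : realType) (S : {fset 'rV[R]_3}) :
  minimally_surrounds S ->
  [\/ critical 3 S,
      exists T1 T2 : {fset 'rV[R]_3},
        [/\ critical 2 T1, critical 2 T2, S = T1 `|` T2 & #|` T1 `&` T2| = 1%N],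
      exists T L : {fset 'rV[R]_3},
        [/\ critical 2 T, critical 1 L, S = T `|` L & [disjoint T & L]]
    | exists L1 L2 L3 : {fset 'rV[R]_3},
        [/\ critical 1 L1, critical 1 L2, critical 1 L3,
            S = L1 `|` L2 `|` L3 &
            [/\ [disjoint L1 & L2], [disjoint L1 & L3] & [disjoint L2 & L3]]]].
Proof.
move=> mS.
have [[C [CS circC C4]]|no4] :=
    classic (exists C, [/\ C `<=` S, pos_circuit C & #|` C| = 4%N]).
  apply: Or41; rewrite -(minimal_circuit4_eq mS CS circC C4).
  exact: pos_circuit_critical.
have C_le3 C : C `<=` S -> pos_circuit C -> (#|` C| <= 3)%N.
  move=> CS circC; have := pos_circuit_card_le circC.
  rewrite leq_eqVlt => /orP[/eqP C4|//].
  by case: no4; exists C.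
have [[T [TS circT T3]]|no3] :=
    classic (exists T, [/\ T `<=` S, pos_circuit T & #|` T| = 3%N]).
  have [] := minimally_surrounds_triangle mS TS circT T3 C_le3.
    exact: Or42.
  exact: Or43.
apply/Or44/minimally_surrounds_segments => // C CS circC.
have := C_le3 C CS circC; rewrite leq_eqVlt => /orP[/eqP C3|//].
by case: no3; exists C.
Qed.
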